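(* Suppose $R$ carries an $A$-grading and an $A'$-grading and $N$ carries a $B$-grading and a $B'$-grading (each pair satisfying the standing assumptions), and that the $(A,B)$-gradings refine the $(A',B')$-gradings. If $X=\{m_1,\dots,m_n\}\subseteq M$ is a Macaulay basis of $M$ with respect to the $(A,B)$-gradings and $X$ generates $M$, then $X$ is also a Macaulay basis of $M$ with respect to the $(A',B')$-gradings.
   Context: Standing assumptions on a grading pair $(A,B)$: $\mathbf{k}$ is a field; $(A,+,0)$ is a finitely generated cancellative commutative monoid with a well-ordered total order such that $0<a$ for $a\ne0$ and $a\le a'\Rightarrow a+c\le a'+c$; $R=\bigoplus_{a\in A}R_a$ is a commutative Noetherian $\mathbf{k}$-algebra with $R_aR_{a'}\subseteq R_{a+a'}$; $B$ is a well-ordered totally ordered set with an action $(a,b)\mapsto a\cdot b$ of $A$ with $0\cdot b=b$, $(a+a')\cdot b=a\cdot(a'\cdot b)$, monotone and cancellative in each argument; $N=\bigoplus_{b\in B}N_b$ is a Noetherian $R$-module with $R_aN_b\subseteq N_{a\cdot b}$; $M\subseteq N$ is an $R$-submodule. For $m=\sum_bm_b\ne0$: $\deg m=\max\{b:m_b\ne0\}$, $\operatorname{lf}(m)=m_{\deg m}$. A finite set $\{m_1,\dots,m_n\}$ of nonzero elements of $M$ is a Macaulay basis of $M$ (w.r.t. the given gradings) if the $R$-submodule generated by $\{\operatorname{lf}(p):0\ne p\in M\}$ equals that generated by $\operatorname{lf}(m_1),\dots,\operatorname{lf}(m_n)$. Refinement: the $(A,B)$-gradings refine the $(A',B')$-gradings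 if there is an order-preserving monoid homomorphism $f:A\to A'$ with $R_{a'}=\bigoplus_{a\in f^{-1}(a')}R_a$ for all $a'\in A'$, and an order-preserving map $g:B\to B'$ with $N_{b'}=\bigoplus_{b\in g^{-1}(b')}N_b$ for all $b'\in B'$ and $f(a)\cdot g(b)=g(a\cdot b)$ for all $a\in A$, $b\in B$. *)

From mathcomp Require Import all_boot all_order all_algebra.
From Stdlib Require List.
Set Implicit Arguments. Unset Strict Implicit. Unset Printing Implicit Defensive.
Import GRing.Theory.
Local Open Scope ring_scope.

Record ordered_monoid (A : Type) (add : A -> A -> A) (z : A)
    (le : A -> A -> Prop) : Prop := {
  om_assoc : forall a b c, add a (add b c) = add (add a b) c;
  om_comm : forall a b, add a b = add b a;
  om_zero : forall a, add z a = a;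
  om_cancel : forall a b c, add a c = add b c -> a = b;
  om_fingen : exists gens : seq A, forall a, exists l : seq A,
      (forall g, List.In g l -> List.In g gens) /\ a = foldr add z l;
  om_refl : forall a, le a a;
  om_antisym : forall a b, le a b -> le b a -> a = b;
  om_trans : forall a b c, le a b -> le b c -> le a c;
  om_total : forall a b, le a b \/ le b a;
  om_wf : forall S : A -> Prop, (exists a, S a) ->
      exists m, S m /\ forall a, S a -> le m a;
  om_pos : forall a, a <> z -> le z a /\ z <> a;
  om_compat : forall a a' c, le a a' -> le (add a c) (add a' c)
}.

Record ordered_action (A : Type) (add : A -> A -> A) (z : A)
    (leA : A -> A -> Prop) (B : Type) (leB : B -> B -> Prop)
    (act : A -> B -> B) : Prop := {
  oa_refl : forall b, leB b b;
  oa_antisym : forall b c, leB b c -> leB c b -> b = c;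
  oa_trans : forall b c d, leB b c -> leB c d -> leB b d;
  oa_total : forall b c, leB b c \/ leB c b;
  oa_wf : forall S : B -> Prop, (exists b, S b) ->
      exists m, S m /\ forall b, S b -> leB m b;
  oa_zero : forall b, act z b = b;
  oa_add : forall a a' b, act (add a a') b = act a (act a' b);
  oa_mono_l : forall a a' b, leA a a' -> leB (act a b) (act a' b);
  oa_mono_r : forall a b b', leB b b' -> leB (act a b) (act a b');
  oa_cancel_l : forall a a' b, act a b = act a' b -> a = a';
  oa_cancel_r : forall a b b', act a b = act a b' -> b = b'
}.

Definition internal_dsum (V : zmodType) (I : Type) (P : I -> Prop)
    (Vi : I -> V -> Prop) (W : V -> Prop) : Prop :=
  (forall v, W v <-> exists (s : seq I) (c : I -> V), List.NoDup s /\
       (forall i, List.In i s -> P i /\ Vi i (c i)) /\ v = \sum_(i <- s) c i) /\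
  (forall (s : seq I) (c : I -> V), List.NoDup s ->
       (forall i, List.In i s -> P i /\ Vi i (c i)) ->
       \sum_(i <- s) c i = 0 -> forall i, List.In i s -> c i = 0).

Definition ksubspace_alg (k : fieldType) (R : comAlgType k) (S : R -> Prop) :=
  S 0 /\ (forall x y, S x -> S y -> S (x + y)) /\
  (forall (c : k) x, S x -> S (c *: x)).

Definition ksubspace_mod (k : fieldType) (R : comAlgType k) (N : lmodType R)
    (S : N -> Prop) :=
  S 0 /\ (forall x y, S x -> S y -> S (x + y)) /\
  (forall (c : k) x, S x -> S ((c%:A : R) *: x)).

Definition submodule (R : comRingType) (N : lmodType R) (S : N -> Prop) :=
  S 0 /\ (forall x y, S x -> S y -> S (x + y)) /\
  (forall (r : R) x, S x -> S (r *: x)).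

Definition span (R : comRingType) (N : lmodType R) (S : N -> Prop) (y : N) :=
  exists l : seq (R * N), (forall p, List.In p l -> S p.2) /\
    y = \sum_(p <- l) p.1 *: p.2.

Definition is_ideal (R : comRingType) (I : R -> Prop) :=
  I 0 /\ (forall x y, I x -> I y -> I (x + y)) /\
  (forall r x, I x -> I (r * x)).

Definition noetherian_ring (R : comRingType) :=
  forall I : R -> Prop, is_ideal I -> exists s : seq R, forall x,
    I x <-> exists l : seq (R * R), (forall p, List.In p l -> List.In p.2 s) /\
            x = \sum_(p <- l) p.1 * p.2.

Definition noetherian_module (R : comRingType) (N : lmodType R) :=
  forall S : N -> Prop, submodule S -> exists s : seq N, forall x,
    S x <-> span (fun y => List.In y s) x.

Record ring_grading (k : fieldType) (R : comAlgType k) (A : Type)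
    (add : A -> A -> A) (RA : A -> R -> Prop) : Prop := {
  rg_sub : forall a, ksubspace_alg (RA a);
  rg_mul : forall a a' x y, RA a x -> RA a' y -> RA (add a a') (x * y);
  rg_dsum : internal_dsum (fun _ => True) RA (fun _ => True)
}.

Record module_grading (k : fieldType) (R : comAlgType k) (N : lmodType R)
    (A : Type) (RA : A -> R -> Prop) (B : Type) (act : A -> B -> B)
    (NB : B -> N -> Prop) : Prop := {
  mg_sub : forall b, ksubspace_mod (NB b);
  mg_mul : forall a b r x, RA a r -> NB b x -> NB (act a b) (r *: x);
  mg_dsum : internal_dsum (fun _ => True) NB (fun _ => True)
}.

(* the standing assumptions on a grading pair (A,B) (other than Noetherianity
   of R and N and M being a submodule, which do not depend on the grading) *)
Record grading_pair (k : fieldType) (R : comAlgType k) (N : lmodType R)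
    (A : Type) (add : A -> A -> A) (z : A) (leA : A -> A -> Prop)
    (B : Type) (leB : B -> B -> Prop) (act : A -> B -> B)
    (RA : A -> R -> Prop) (NB : B -> N -> Prop) : Prop := {
  gp_monoid : ordered_monoid add z leA;
  gp_action : ordered_action add z leA leB act;
  gp_ring : ring_grading add RA;
  gp_mod : module_grading RA act NB
}.

Record refines (k : fieldType) (R : comAlgType k) (N : lmodType R)
    (A : Type) (add : A -> A -> A) (z : A) (leA : A -> A -> Prop)
    (B : Type) (leB : B -> B -> Prop) (act : A -> B -> B)
    (RA : A -> R -> Prop) (NB : B -> N -> Prop)
    (A' : Type) (add' : A' -> A' -> A') (z' : A') (leA' : A' -> A' -> Prop)
    (B' : Type) (leB' : B' -> B' -> Prop) (act' : A' -> B' -> B')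
    (RA' : A' -> R -> Prop) (NB' : B' -> N -> Prop)
    (f : A -> A') (g : B -> B') : Prop := {
  rf_zero : f z = z';
  rf_add : forall a b, f (add a b) = add' (f a) (f b);
  rf_mono : forall a b, leA a b -> leA' (f a) (f b);
  rf_ring : forall a', internal_dsum (fun a => f a = a') RA (RA' a');
  rg_mono : forall b c, leB b c -> leB' (g b) (g c);
  rg_mod : forall b', internal_dsum (fun b => g b = b') NB (NB' b');
  rg_act : forall a b, act' (f a) (g b) = g (act a b)
}.

Definition leading_form (R : comRingType) (N : lmodType R) (B : Type)
    (leB : B -> B -> Prop) (NB : B -> N -> Prop) (m f : N) : Prop :=
  exists (s : seq B) (c : B -> N) (d : B), List.NoDup s /\
    (forall b, List.In b s -> NB b (c b)) /\ m = \sum_(b <- s) c b /\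
    List.In d s /\ c d <> 0 /\ f = c d /\
    (forall b, List.In b s -> c b <> 0 -> leB b d).

Definition macaulay_basis (R : comRingType) (N : lmodType R) (B : Type)
    (leB : B -> B -> Prop) (NB : B -> N -> Prop) (M : N -> Prop)
    (X : seq N) : Prop :=
  (forall x, List.In x X -> M x /\ x <> 0) /\
  (forall y,
     span (fun u => exists p, M p /\ p <> 0 /\ leading_form leB NB p u) y <->
     span (fun u => exists x, List.In x X /\ leading_form leB NB x u) y).

Definition generates (R : comRingType) (N : lmodType R) (X : seq N)
    (M : N -> Prop) : Prop :=
  forall y, M y <-> span (fun u => List.In u X) y.

(* For a B-graded module write [pr b] for the projection onto the component
   of degree b.  The B'-component of degree b' is the sum of the
   B-components of degree b with g b = b', hence the B'-degree of a vector
   is g of its B-degree and its B'-leading form is pr' (g D) p.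

   The heart of the proof is a well-founded induction on D (coarse_top_span):
   if p in M has all its B-components in degrees <= D, then pr' (g D) p is a
   combination of B'-leading forms of X.  Writing the B-leading form pr D p
   as a combination of terms h * lf(x), h homogeneous and x in X, yields q
   in M with the same D-component and no components above D, whose
   B'-component of degree g D is visibly such a combination (top_part); the
   remainder p - q has smaller B-degree D', and g D' = g D unless the
   B'-component of p - q in degree g D vanishes. *)

From Pilot Require Import Defs.
From mathcomp Require Import all_boot all_order all_algebra.
From mathcomp Require Import boolp.
From Stdlib Require List.
Import Pilot.Defs.
Set Implicit Arguments. Unset Strict Implicit. Unset Printing Implicit Defensive.
Import GRing.Theory.
Local Open Scope ring_scope.

Lemma InE (T : eqType) (x : T) (s : seq T) : List.In x s <-> x \in s.
Proof.
elim: s => [|y s IH] //=; rewrite in_cons; split.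
- by case=> [->|/IH ->]; rewrite ?eqxx ?orbT.
- by case/orP=> [/eqP->|/IH]; [left|right].
Qed.

Lemma NoDupE (T : eqType) (s : seq T) : List.NoDup s <-> uniq s.
Proof.
elim: s => [|y s IH] /=; first by split => // _; constructor.
split.
- move=> H; inversion H; subst; apply/andP; split; last by apply/IH.
  by apply/negP => /InE.
- by case/andP=> /negP Hy /IH Hs; constructor => // /InE.
Qed.

Lemma seq_max (T : eqType) (le : T -> T -> Prop) :
  (forall b, le b b) -> (forall b c d, le b c -> le c d -> le b d) ->
  (forall b c, le b c \/ le c b) ->
  forall t : seq T, t != [::] -> exists2 d, d \in t & forall b, b \in t -> le b d.
Proof.
move=> le_refl le_trans le_total; elim=> [|y [|z t] IH] // _.
  by exists y => [|b]; rewrite ?mem_seq1 // => /eqP ->.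
have [d Hd Hmax] := IH isT.
have [Hdy|Hyd] := le_total d y.
  exists y => [|b]; first by rewrite in_cons eqxx.
  by rewrite in_cons => /orP [/eqP ->//|/Hmax Hb]; apply: le_trans Hb Hdy.
exists d => [|b]; first by rewrite in_cons Hd orbT.
by rewrite in_cons => /orP [/eqP ->//|/Hmax].
Qed.

Lemma wf_ind (T : Type) (le : T -> T -> Prop) :
  (forall b c, le b c -> le c b -> b = c) ->
  (forall S : T -> Prop, (exists b, S b) -> exists m, S m /\ forall b, S b -> le m b) ->
  forall P : T -> Prop,
    (forall D, (forall D', le D' D -> D' <> D -> P D') -> P D) -> forall D, P D.
Proof.
move=> le_anti le_wf P IH D; apply: contrapT => ND.
have [m [Pm Hmin]] := le_wf (fun D => ~ P D) (ex_intro _ D ND).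
apply: Pm; apply: IH => D' D'm D'_neq; apply: contrapT => ND'.
by apply: D'_neq; apply: le_anti D'm (Hmin _ ND').
Qed.

Lemma sum_extend (V : nmodType) (I : eqType) (u s : seq I) (F : I -> V) :
  uniq u -> uniq s -> {subset s <= u} ->
  \sum_(i <- u) (if i \in s then F i else 0) = \sum_(i <- s) F i.
Proof.
move=> Uu Us Ssu; rewrite -big_mkcond -big_filter; apply: perm_big.
apply: uniq_perm; rewrite ?filter_uniq // => i.
by rewrite mem_filter; case Hi: (i \in s) => //=; rewrite Ssu.
Qed.

Section Span.
Variables (R : comNzRingType) (N : lmodType R) (T : N -> Prop).

Lemma span_in u : T u -> span T u.
Proof.
move=> Tu; exists [:: (1, u)]; split; last by rewrite big_seq1 scale1r.
by move=> p [<-|[]].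
Qed.

Lemma span0 : span T 0.
Proof. by exists [::]; split => //; rewrite big_nil. Qed.

Lemma span_add y z : span T y -> span T z -> span T (y + z).
Proof.
move=> [l1 [H1 ->]] [l2 [H2 ->]]; exists (l1 ++ l2); split; last by rewrite big_cat.
by move=> p /InE; rewrite mem_cat => /orP[]/InE; [apply: H1|apply: H2].
Qed.

Lemma span_scale r y : span T y -> span T (r *: y).
Proof.
move=> [l [H ->]]; exists [seq (r * p.1, p.2) | p <- l]; split.
  by move=> p /InE /mapP [q Hq ->]; apply: (H q); apply/InE.
by rewrite big_map scaler_sumr; apply: eq_bigr => p _; rewrite scalerA.
Qed.

Lemma span_sum (J : eqType) (s : seq J) (P : pred J) (F : J -> N) :
  (forall j, j \in s -> P j -> span T (F j)) -> span T (\sum_(j <- s | P j) F j).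
Proof.
move=> HF; rewrite big_seq_cond; apply: big_ind; [exact: span0|exact: span_add|].
by move=> j /andP[]; apply: HF.
Qed.

Lemma span_trans (S : N -> Prop) y : (forall u, S u -> span T u) -> span S y -> span T y.
Proof.
move=> HST [l [Hl ->]]; apply: span_sum => p /InE Hp _.
by apply/span_scale/HST/Hl.
Qed.

End Span.

Lemma submodule_sum (R : comNzRingType) (N : lmodType R) (M : N -> Prop)
    (J : eqType) (s : seq J) (P : pred J) (F : J -> N) :
  submodule M -> (forall j, j \in s -> P j -> M (F j)) -> M (\sum_(j <- s | P j) F j).
Proof.
move=> [M0 [MD _]] HF; rewrite big_seq_cond; apply: big_ind => // j /andP[].
exact: HF.
Qed.

Lemma big_pred1_uniq (V : nmodType) (I : eqType) (s : seq I) (x : I) (F : I -> V) :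
  uniq s -> \sum_(i <- s | i == x) F i = if x \in s then F x else 0.
Proof.
elim: s => [|y s IH] /=; first by rewrite big_nil.
case/andP=> ys Us; rewrite big_cons in_cons IH // eq_sym.
by have [->|] := eqVneq x y; rewrite ?(negbTE ys) ?addr0.
Qed.

Section GradedModule.
Variables (k : fieldType) (R : comAlgType k) (N : lmodType R).
Variables (A : Type) (RA : A -> R -> Prop) (I : eqType) (act : A -> I -> I).
Variable V : I -> N -> Prop.
Hypothesis VG : module_grading RA act V.

Lemma hom0 i : V i 0.
Proof. by case: (mg_sub VG i). Qed.

Lemma homD i x y : V i x -> V i y -> V i (x + y).
Proof. by case: (mg_sub VG i) => _ [+ _]; apply. Qed.

Lemma homN i x : V i x -> V i (- x).
Proof.
case: (mg_sub VG i) => _ [_ HZ] /(HZ (-1)).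
by rewrite scaleNr scale1r scaleN1r.
Qed.

Lemma decomp_exists v : exists (s : seq I) (c : I -> N),
  [/\ uniq s, forall i, V i (c i) & v = \sum_(i <- s) c i].
Proof.
have [s [c [/NoDupE Us [Hc Hv]]]] := proj1 (proj1 (mg_dsum VG) v) Logic.I.
exists s, (fun i => if i \in s then c i else 0); split => //.
  by move=> i; case: ifP => [/InE/Hc[]//|_]; exact: hom0.
by rewrite Hv; apply: eq_big_seq => i ->.
Qed.

Lemma decomp_unique (s : seq I) (c : I -> N) : uniq s -> (forall i, V i (c i)) ->
  \sum_(i <- s) c i = 0 -> forall i, i \in s -> c i = 0.
Proof.
move=> /NoDupE Us Hc sum0 i /InE.
by apply: (proj2 (mg_dsum VG) s c Us) => // j _.
Qed.

Definition supp v : seq I := proj1_sig (cid (decomp_exists v)).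
Definition component v : I -> N := proj1_sig (cid (proj2_sig (cid (decomp_exists v)))).

Lemma component_spec v :
  [/\ uniq (supp v), forall i, V i (component v i) & v = \sum_(i <- supp v) component v i].
Proof. exact: proj2_sig (cid (proj2_sig (cid (decomp_exists v)))). Qed.

Definition pr i v := if i \in supp v then component v i else 0.

Lemma supp_uniq v : uniq (supp v).
Proof. by case: (component_spec v). Qed.

Lemma pr_in i v : V i (pr i v).
Proof. by rewrite /pr; case: ifP => _; [case: (component_spec v)|exact: hom0]. Qed.

Lemma pr_out i v : i \notin supp v -> pr i v = 0.
Proof. by rewrite /pr => /negbTE ->. Qed.

Lemma pr_supp i v : pr i v != 0 -> i \in supp v.
Proof. by apply: contraR => /pr_out ->. Qed.

Lemma pr_sum v : v = \sum_(i <- supp v) pr i v.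
Proof.
case: (component_spec v) => _ _ {1}->.
by apply: eq_big_seq => i iv; rewrite /pr iv.
Qed.

Lemma pr_sum_over (u : seq I) v : uniq u -> {subset supp v <= u} ->
  v = \sum_(i <- u) pr i v.
Proof.
move=> Uu sub; rewrite {1}(pr_sum v) -(sum_extend (pr^~ v) Uu (supp_uniq v) sub).
by apply: eq_bigr => i _; case: ifP => // /negbT /pr_out ->.
Qed.

Lemma pr_decomp (s : seq I) (c : I -> N) j : uniq s -> (forall i, V i (c i)) ->
  pr j (\sum_(i <- s) c i) = if j \in s then c j else 0.
Proof.
set v := \sum_(i <- s) c i => Us Hc.
set u := undup (s ++ supp v).
have Uu : uniq u := undup_uniq _.
pose d i := (if i \in s then c i else 0) - pr i v.
have d_hom i : V i (d i).
  by apply/homD/homN/pr_in; case: ifP => _; [exact: Hc|exact: hom0].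
have sum_d : \sum_(i <- u) d i = 0.
  rewrite /d big_split sumrN -(pr_sum_over Uu) => [|i]; last first.
    by rewrite mem_undup mem_cat => ->; rewrite orbT.
  rewrite sum_extend -/v => [|//|//|i]; first exact: subrr.
  by rewrite mem_undup mem_cat => ->.
case uj : (j \in u).
  have /eqP := decomp_unique Uu d_hom sum_d uj.
  by rewrite subr_eq0 => /eqP <-.
move: uj; rewrite mem_undup mem_cat => /negbT; rewrite negb_or.
by case/andP=> /negbTE -> /pr_out.
Qed.

Lemma pr_hom i0 x i : V i0 x -> pr i x = if i0 == i then x else 0.
Proof.
move=> Hx; pose c j := if j == i0 then x else 0.
have Hc j : V j (c j) by rewrite /c; case: eqP => [->|_]; [exact: Hx|exact: hom0].
have := pr_decomp i (isT : uniq [:: i0]) Hc.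
by rewrite big_seq1 /c eqxx mem_seq1 eq_sym => ->; case: eqP.
Qed.

Lemma pr_pr i j v : pr j (pr i v) = if i == j then pr i v else 0.
Proof. exact: pr_hom (pr_in i v). Qed.

Lemma pr0 i : pr i 0 = 0.
Proof. by rewrite (pr_hom i (hom0 i)); case: eqP. Qed.

Lemma prD i v w : pr i (v + w) = pr i v + pr i w.
Proof.
set u := undup (supp v ++ supp w).
have Uu : uniq u := undup_uniq _.
rewrite {1}(pr_sum_over Uu (v := v)) => [|j]; last first.
  by rewrite mem_undup mem_cat => ->.
rewrite {1}(pr_sum_over Uu (v := w)) => [|j]; last first.
  by rewrite mem_undup mem_cat => ->; rewrite orbT.
rewrite -big_split pr_decomp //; last by move=> j; apply: homD; apply: pr_in.
case: ifP => // /negbT; rewrite mem_undup mem_cat negb_or.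
by case/andP=> /pr_out -> /pr_out ->; rewrite addr0.
Qed.

Lemma prN i v : pr i (- v) = - pr i v.
Proof. by apply/eqP; rewrite -addr_eq0 -prD addNr pr0. Qed.

Lemma prB i v w : pr i (v - w) = pr i v - pr i w.
Proof. by rewrite prD prN. Qed.

Lemma pr_sumr i (J : Type) (s : seq J) (P : pred J) (F : J -> N) :
  pr i (\sum_(j <- s | P j) F j) = \sum_(j <- s | P j) pr i (F j).
Proof. exact: (big_morph (pr i) (prD i) (pr0 i)). Qed.

Lemma pr_fiber (J : Type) (s : seq J) (e : J -> I) (c : J -> N) i :
  (forall j, V (e j) (c j)) ->
  pr i (\sum_(j <- s) c j) = \sum_(j <- s | e j == i) c j.
Proof.
move=> Hc; rewrite pr_sumr [RHS]big_mkcond; apply: eq_bigr => j _.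
exact: pr_hom (Hc j).
Qed.

Lemma pr_restrict (P : pred I) d v :
  P d -> pr d (\sum_(b <- supp v | P b) pr b v) = pr d v.
Proof.
move=> Pd; rewrite [in RHS](pr_sum v) !pr_sumr big_rmcond // => b.
by rewrite pr_pr; case: eqP => // ->; rewrite Pd.
Qed.

Lemma pr_scale_fiber a h x b :
  RA a h -> pr b (h *: x) = \sum_(c <- supp x | act a c == b) h *: pr c x.
Proof.
move=> Hh; rewrite {1}(pr_sum x) scaler_sumr; apply: pr_fiber => c.
exact: (mg_mul VG Hh (pr_in c x)).
Qed.

Lemma scale_comp_deg a h d x b : RA a h -> pr b (h *: pr d x) != 0 -> act a d = b.
Proof.
move=> Hh; rewrite (pr_hom b (mg_mul VG Hh (pr_in d x))).
by case: (act a d =P b) => // _; rewrite eqxx.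
Qed.

Lemma pr_scale (act_cancel : forall a b b', act a b = act a b' -> b = b') a h c x :
  RA a h -> pr (act a c) (h *: x) = h *: pr c x.
Proof.
move=> Hh; rewrite (pr_scale_fiber _ _ Hh) (eq_bigl (fun c' => c' == c)) => [|c'].
  by rewrite big_pred1_uniq ?supp_uniq //; case: ifP => // /negbT /pr_out ->; rewrite scaler0.
by apply/eqP/eqP => [/act_cancel|->].
Qed.

Variable le : I -> I -> Prop.

Definition bounded d v := forall b, pr b v <> 0 -> le b d.

Definition isdeg v d := pr d v <> 0 /\ bounded d v.

Lemma deg_exists (le_refl : forall b, le b b)
    (le_trans : forall b c d, le b c -> le c d -> le b d)
    (le_total : forall b c, le b c \/ le c b) v :
  v <> 0 -> exists d, isdeg v d.
Proof.
move=> v0; set t := [seq i <- supp v | pr i v != 0].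
have t0 : t != [::].
  apply/eqP => t_nil; apply: v0; rewrite (pr_sum v) big1 // => i _.
  apply/eqP; apply: contraT => nz.
  have : i \in t by rewrite mem_filter nz pr_supp.
  by rewrite t_nil.
have [d Hd Hmax] := seq_max le_refl le_trans le_total t0.
exists d; split; first by move: Hd; rewrite mem_filter => /andP[/eqP].
by move=> b /eqP nz; apply: Hmax; rewrite mem_filter nz pr_supp.
Qed.

Lemma isdeg_uniq (le_anti : forall b c, le b c -> le c b -> b = c) v d d' :
  isdeg v d -> isdeg v d' -> d = d'.
Proof. by move=> [d0 Hd] [d'0 Hd']; apply: le_anti; [apply: Hd'|apply: Hd]. Qed.

Lemma leading_formE v u : leading_form le V v u <-> exists d, isdeg v d /\ u = pr d v.
Proof.
split.
- move=> [s [c [d [/NoDupE Us [Hc [Hv [/InE ds [cd0 [-> Hmax]]]]]]]]].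
  pose c' i := if i \in s then c i else 0.
  have Hc' i : V i (c' i).
    by rewrite /c'; case: ifP => [/InE/Hc|_] //; exact: hom0.
  have Ev : v = \sum_(i <- s) c' i by rewrite Hv; apply: eq_big_seq => i; rewrite /c' => ->.
  have prv j : pr j v = if j \in s then c j else 0.
    by rewrite Ev pr_decomp // /c'; case: (j \in s).
  exists d; split; last by rewrite prv ds.
  split; first by rewrite prv ds.
  by move=> b; rewrite prv; case: ifP => // /InE bs; apply: Hmax.
- move=> [d [[d0 Hmax] ->]].
  exists (supp v), (pr^~ v), d; split; first exact/NoDupE/supp_uniq.
  split; first by move=> b _; apply: pr_in.
  split; first exact: pr_sum.
  split; first by apply/InE/pr_supp/eqP.
  by do 2 split => //; move=> b _; apply: Hmax.
Qed.

Lemma bounded_sum d (J : eqType) (s : seq J) (P : pred J) (F : J -> N) :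
  (forall j, j \in s -> P j -> bounded d (F j)) -> bounded d (\sum_(j <- s | P j) F j).
Proof.
move=> HF b; rewrite big_seq_cond pr_sumr => nz; apply: contrapT => nle; apply: nz.
apply: big1 => j /andP [js Pj]; apply: contrapT => nz; exact: nle (HF j js Pj b nz).
Qed.

Lemma bounded_sub d v w : bounded d v -> bounded d w -> bounded d (v - w).
Proof.
move=> Hv Hw b; rewrite prB; case: (pselect (pr b v = 0)) => [->|/Hv //].
by rewrite sub0r => /eqP; rewrite oppr_eq0 => /eqP /Hw.
Qed.

Lemma bounded_scale (act_mono : forall a b b', le b b' -> le (act a b) (act a b'))
    a h d x : RA a h -> bounded d x -> bounded (act a d) (h *: x).
Proof.
move=> Hh Hx b; rewrite (pr_scale_fiber _ _ Hh) => nz; apply: contrapT => nle.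
apply: nz; apply: big1 => c /eqP cb; apply: contrapT => nz; apply: nle.
by rewrite -cb; apply/act_mono/Hx => c0; apply: nz; rewrite c0 scaler0.
Qed.

End GradedModule.

Section Refinement.
Variables (k : fieldType) (R : comAlgType k) (N : lmodType R).
Variables (A : eqType) (addA : A -> A -> A) (zA : A) (leA : A -> A -> Prop).
Variables (B : eqType) (leB : B -> B -> Prop) (actB : A -> B -> B).
Variables (RA : A -> R -> Prop) (NB : B -> N -> Prop).
Variables (A' : Type) (addA' : A' -> A' -> A') (zA' : A') (leA' : A' -> A' -> Prop).
Variables (B' : eqType) (leB' : B' -> B' -> Prop) (actB' : A' -> B' -> B').
Variables (RA' : A' -> R -> Prop) (NB' : B' -> N -> Prop).
Variables (f : A -> A') (g : B -> B').
Hypothesis GP : grading_pair addA zA leA leB actB RA NB.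
Hypothesis GP' : grading_pair addA' zA' leA' leB' actB' RA' NB'.
Hypothesis RF : refines addA zA leA leB actB RA NB addA' zA' leA' leB' actB' RA' NB' f g.

Local Notation OA := (gp_action GP).
Local Notation OA' := (gp_action GP').
Local Notation fpr := (pr (gp_mod GP)).
Local Notation cpr := (pr (gp_mod GP')).
Local Notation fbounded := (bounded (gp_mod GP) leB).
Local Notation cbounded := (bounded (gp_mod GP') leB').
Local Notation fdeg := (isdeg (gp_mod GP) leB).
Local Notation cdeg := (isdeg (gp_mod GP') leB').

Lemma ring_decomp r : exists (s : seq A) (c : A -> R),
  (forall a, a \in s -> RA a (c a)) /\ r = \sum_(a <- s) c a.
Proof.
have [s [c [_ [Hc ->]]]] := proj1 (proj1 (rg_dsum (gp_ring GP)) r) Logic.I.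
by exists s, c; split => // a /InE /Hc [].
Qed.

Lemma refine_ring_hom a h : RA a h -> RA' (f a) h.
Proof.
move=> Hh; apply/(proj1 (rf_ring RF (f a)) h).
exists [:: a], (fun _ => h); split; first by constructor; [|constructor].
by split; [move=> i [<-|[]]|rewrite big_seq1].
Qed.

Lemma refine_mod_hom b x : NB b x -> NB' (g b) x.
Proof.
move=> Hx; apply/(proj1 (rg_mod RF (g b)) x).
exists [:: b], (fun _ => x); split; first by constructor; [|constructor].
by split; [move=> i [<-|[]]|rewrite big_seq1].
Qed.

Lemma coarse_pr_fiber b' v :
  cpr b' v = \sum_(b <- supp (gp_mod GP) v | g b == b') fpr b v.
Proof.
rewrite {1}(pr_sum (gp_mod GP) v); apply: pr_fiber => b.
by apply: refine_mod_hom; apply: pr_in.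
Qed.

Lemma coarse_bounded D v : fbounded D v -> cbounded (g D) v.
Proof.
move=> HD b'; rewrite coarse_pr_fiber => nz; apply: contrapT => nle; apply: nz.
apply: big1 => b /eqP gb; apply: contrapT => nz; apply: nle.
by rewrite -gb; apply/(rg_mono RF)/HD.
Qed.

Lemma coarse_isdeg v d : fdeg v d -> cdeg v (g d).
Proof.
move=> [d0 Hd]; split; last exact: coarse_bounded.
move=> cd0; apply: d0.
rewrite -(pr_restrict (gp_mod GP) (P := fun b => g b == g d) v (eqxx (g d))).
by rewrite -coarse_pr_fiber cd0 pr0.
Qed.

Lemma fine_pr_scale a h c x : RA a h -> fpr (actB a c) (h *: x) = h *: fpr c x.
Proof. exact: (pr_scale _ (oa_cancel_r OA)). Qed.

Lemma coarse_pr_scale a h d x :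
  RA a h -> cpr (g (actB a d)) (h *: x) = h *: cpr (g d) x.
Proof.
move=> Hh; rewrite -(rg_act RF); apply: (pr_scale _ (oa_cancel_r OA')).
exact: refine_ring_hom.
Qed.

Section Macaulay.
Variables (M : N -> Prop) (X : seq N).
Hypothesis HM : submodule M.
Hypothesis HX : macaulay_basis leB NB M X.

Local Notation LF := (fun u => exists x, List.In x X /\ leading_form leB NB x u).
Local Notation LF' := (fun u => exists x, List.In x X /\ leading_form leB' NB' x u).

Lemma lf_span_homog y : span LF y -> exists l : seq (R * N * B),
  (forall t, t \in l -> [/\ List.In t.1.2 X, fdeg t.1.2 t.2 & exists a, RA a t.1.1]) /\
  y = \sum_(t <- l) t.1.1 *: fpr t.2 t.1.2.
Proof.
move=> [l0 [Hl0 ->]]; elim: l0 Hl0 => [|[r u] l0 IH] Hl0.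
  by exists [::]; rewrite !big_nil.
rewrite big_cons; have [l [Hl ->]] := IH (fun p Hp => Hl0 p (or_intror Hp)).
have [x [Xx /(leading_formE (gp_mod GP) leB) [d [xd ->]]]] := Hl0 (r, u) (or_introl erefl).
have [s [c [Hc ->]]] := ring_decomp r.
exists ([seq (c a, x, d) | a <- s] ++ l); split.
  move=> t; rewrite mem_cat => /orP[/mapP [a sa ->]|/Hl //].
  by split => //; exists a; apply: Hc.
by rewrite big_cat big_map scaler_suml.
Qed.

Lemma top_part D p : M p -> fbounded D p ->
  exists q, [/\ M q, fbounded D q, fpr D q = fpr D p & span LF' (cpr (g D) q)].
Proof.
move=> Mp pD; case: (pselect (fpr D p = 0)) => [pD0|pD0].
  exists 0; rewrite !pr0 pD0; split => //; [by case: HM|by move=> b; rewrite pr0|].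
  exact: span0.
have top_span : span LF (fpr D p).
  apply/(proj2 HX); apply: span_in; exists p; split => //; split.
    by move=> p0; apply: pD0; rewrite p0 pr0.
  by apply/(leading_formE (gp_mod GP) leB); exists D.
have [l [Hl E]] := lf_span_homog top_span.
pose top (t : R * N * B) := fpr D (t.1.1 *: fpr t.2 t.1.2) != 0.
have top_deg t : t \in l -> top t -> exists2 a, RA a t.1.1 & actB a t.2 = D.
  by case/Hl=> _ _ [a Ha] /(scale_comp_deg Ha); exists a.
exists (\sum_(t <- l | top t) t.1.1 *: t.1.2); split.
- apply: submodule_sum => // t /Hl [Xx _ _] _.
  by case: HM => [_ [_ MZ]]; apply/MZ/(proj1 (proj1 HX _ Xx)).
- apply: bounded_sum => t tl tt; have [a Ha aD] := top_deg t tl tt.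
  have [_ [_ xd] _] := Hl t tl.
  by rewrite -aD; move: (bounded_scale (oa_mono_r OA) Ha xd).
- have -> : fpr D p = fpr D (fpr D p) by rewrite pr_pr eqxx.
  rewrite E !pr_sumr -(big_rmcond _ _ (P := top)) => [|t /negPn /eqP //].
  rewrite big_seq_cond [RHS]big_seq_cond; apply: eq_bigr => t /andP [tl tt].
  have [a Ha aD] := top_deg t tl tt.
  by rewrite -aD !fine_pr_scale // pr_pr eqxx.
- rewrite pr_sumr; apply: span_sum => t tl tt.
  have [a Ha aD] := top_deg t tl tt; have [Xx xd _] := Hl t tl.
  rewrite -aD coarse_pr_scale //; apply/span_scale/span_in.
  exists t.1.2; split => //; apply/(leading_formE (gp_mod GP') leB').
  by exists (g t.2); split => //; exact: coarse_isdeg.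
Qed.

Lemma coarse_top_span D p : M p -> fbounded D p -> span LF' (cpr (g D) p).
Proof.
move: D p; apply: (wf_ind (oa_antisym OA) (oa_wf OA)) => D IH p Mp pD.
have [q [Mq qD qtop qspan]] := top_part Mp pD.
have Mr : M (p - q).
  by case: HM => [_ [MD MZ]]; apply: MD => //; rewrite -scaleN1r; apply: MZ.
have rD : fbounded D (p - q) := bounded_sub pD qD.
rewrite -(subrK q p) prD; apply: span_add => //.
case: (pselect (cpr (g D) (p - q) = 0)) => [->|r_top]; first exact: span0.
have [|D' [D'0 rD']] :=
  deg_exists (gp_mod GP) (oa_refl OA) (oa_trans OA) (oa_total OA) (v := p - q).
  by move=> r0; apply: r_top; rewrite r0 pr0.
have D'D : leB D' D := rD D' D'0.
have gD : g D' = g D.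
  apply: (oa_antisym OA'); first exact: rg_mono RF _ _ D'D.
  exact: coarse_bounded rD' _ r_top.
rewrite -gD; apply: IH => // DD'; apply: D'0.
by rewrite DD' prB qtop subrr.
Qed.

Lemma coarse_lf_span p u : M p -> p <> 0 -> leading_form leB' NB' p u -> span LF' u.
Proof.
move=> Mp p0 /(leading_formE (gp_mod GP') leB') [d' [pd' ->]].
have [D pD] := deg_exists (gp_mod GP) (oa_refl OA) (oa_trans OA) (oa_total OA) p0.
rewrite (isdeg_uniq (oa_antisym OA') pd' (coarse_isdeg pD)).
exact: coarse_top_span Mp pD.2.
Qed.

End Macaulay.
End Refinement.

Theorem mainTheorem6 (k : fieldType) (R : comAlgType k) (N : lmodType R)
    (A : Type) (addA : A -> A -> A) (zA : A) (leA : A -> A -> Prop)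
    (B : Type) (leB : B -> B -> Prop) (actB : A -> B -> B)
    (RA : A -> R -> Prop) (NB : B -> N -> Prop)
    (A' : Type) (addA' : A' -> A' -> A') (zA' : A') (leA' : A' -> A' -> Prop)
    (B' : Type) (leB' : B' -> B' -> Prop) (actB' : A' -> B' -> B')
    (RA' : A' -> R -> Prop) (NB' : B' -> N -> Prop)
    (M : N -> Prop) (X : seq N) :
  noetherian_ring R ->
  noetherian_module N ->
  submodule M ->
  grading_pair addA zA leA leB actB RA NB ->
  grading_pair addA' zA' leA' leB' actB' RA' NB' ->
  (exists (f : A -> A') (g : B -> B'),
     refines addA zA leA leB actB RA NB addA' zA' leA' leB' actB' RA' NB' f g) ->
  macaulay_basis leB NB M X ->
  generates X M ->
  macaulay_basis leB' NB' M X.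
Proof.
move=> _ _ HM GP GP' [f [g RF]] HX _.
have lf_span := coarse_lf_span (A := {classic A}) (B := {classic B})
  (B' := {classic B'}) GP GP' RF HM HX.
split=> [|y]; first exact: (proj1 HX).
split; apply: span_trans => u.
- by case=> p [Mp [p0 Hu]]; exact: lf_span Mp p0 Hu.
- by case=> x [Xx Hu]; apply: span_in; have [Mx x0] := proj1 HX x Xx; exists x.
Qed.
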